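(* If a graph $G$ is a $k$-AND-PCG, then its complement $\overline{G}$ is a $2k$-OR-PCG.
   Context: All trees are unrooted with edges weighted by nonnegative reals; $d_T(u,v)$ is the weight of the path between leaves $u,v$ of $T$. A graph $H$ is a PCG if there exist a tree $T$ with leaf set $V(H)$ and an interval $I$ of nonnegative reals such that $\{u,v\}\in E(H)$ iff $d_T(u,v)\in I$. A graph $G=(V,E)$ is a $k$-OR-PCG (resp. $k$-AND-PCG) if there exist $k$ PCGs $G_1,\ldots,G_k$ on vertex set $V$ with $E=\bigcup_i E(G_i)$ (resp. $E=\bigcap_i E(G_i)$). $\overline{G}$ denotes the complement graph. *)

From HB Require Import structures.
From mathcomp Require Import all_boot all_order all_algebra.
From mathcomp Require Import reals.
Set Implicit Arguments. Unset Strict Implicit. Unset Printing Implicit Defensive.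
Import Order.TTheory GRing.Theory Num.Theory.
Local Open Scope ring_scope.

Definition is_tree (N : finType) (e : rel N) : Prop :=
  symmetric e /\ irreflexive e /\
  (forall x y : N, connect e x y) /\
  (forall (x : N) (p q : seq N),
      path e x p -> path e x q -> uniq (x :: p) -> uniq (x :: q) ->
      last x p = last x q -> p = q).

Definition is_leaf (N : finType) (e : rel N) (x : N) : bool :=
  (#|[set y | e x y]| <= 1)%N.

Definition walk_weight (R : realType) (N : finType) (w : N -> N -> R)
    (x : N) (p : seq N) : R :=
  \sum_(d <- pairmap w x p) d.

Definition tdist_in (R : realType) (N : finType) (e : rel N)
    (w : N -> N -> R) (a b : N) (I : interval R) : Prop :=
  exists p : seq N, [/\ path e a p, last a p = b, uniq (a :: p)
                      & walk_weight w a p \in I].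

(* H (a graph on V, given by its adjacency relation) is a pairwise
   compatibility graph: there are an edge-weighted tree T (nonnegative
   weights) whose leaf set is (a bijective copy of) V, and an interval I of
   nonnegative reals, with {u,v} in E(H) iff d_T(u,v) \in I. *)
Definition is_PCG (R : realType) (V : finType) (H : rel V) : Prop :=
  exists (N : finType) (e : rel N) (w : N -> N -> R) (f : V -> N)
         (I : interval R),
    [/\ is_tree e,
        (forall x y, e x y -> 0 <= w x y /\ w x y = w y x),
        injective f &
      [/\ (forall x, is_leaf e x <-> exists v, f v = x),
        (forall r : R, r \in I -> 0 <= r)
      & (forall u v, u != v -> (H u v <-> tdist_in e w (f u) (f v) I))]].

Definition simple_graph (V : finType) (E : rel V) : Prop :=
  symmetric E /\ irreflexive E.

Definition compl_graph (V : finType) (E : rel V) : rel V :=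
  fun u v => (u != v) && ~~ E u v.

Definition is_k_OR_PCG (R : realType) (k : nat) (V : finType) (E : rel V) : Prop :=
  exists G : 'I_k -> rel V,
    (forall i, is_PCG R (G i)) /\
    (forall u v, u != v -> (E u v <-> exists i, G i u v)).

Definition is_k_AND_PCG (R : realType) (k : nat) (V : finType) (E : rel V) : Prop :=
  exists G : 'I_k -> rel V,
    (forall i, is_PCG R (G i)) /\
    (forall u v, u != v -> (E u v <-> forall i, G i u v)).

(* The complement of a single PCG with tree T and interval I is the union of
   the two PCGs on the same tree whose intervals are the nonnegative parts of
   the two components of the complement of I; this works because in a tree
   every pair of leaves has exactly one distance.  Complementing an
   intersection of k PCGs gives the union of their k complements, hence of
   2k PCGs. *)

From mathcomp Require Import all_boot all_order all_algebra.
From mathcomp Require Import reals.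
From mathcomp Require Import boolp.
Set Implicit Arguments. Unset Strict Implicit. Unset Printing Implicit Defensive.
Import Order.TTheory GRing.Theory Num.Theory.
Local Open Scope ring_scope.

Section TreeDistance.
Variables (R : realType) (N : finType) (e : rel N) (w : N -> N -> R).
Hypothesis tree_e : is_tree e.
Hypothesis w_ge0 : forall x y, e x y -> 0 <= w x y /\ w x y = w y x.

Lemma tree_unique_path (a b : N) :
  exists p, [/\ path e a p, last a p = b, uniq (a :: p) &
    forall q, path e a q -> last a q = b -> uniq (a :: q) -> q = p].
Proof.
case: tree_e => _ [_ [connected_e uniq_path]].
have /connectP [p0 path_p0 ->] := connected_e a b.
case: (shortenP path_p0) => p path_p uniq_p _.
by exists p; split => // q path_q last_q uniq_q; exact: (uniq_path a q p).
Qed.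

Lemma walk_weight_ge0 (a : N) (p : seq N) : path e a p -> 0 <= walk_weight w a p.
Proof.
elim: p a => [|b p IHp] a; first by rewrite /walk_weight big_nil.
case/andP => e_ab path_p; rewrite /walk_weight /= big_cons.
by rewrite addr_ge0 //; [case: (w_ge0 e_ab) | exact: IHp].
Qed.

Lemma tdist_in_dist (a b : N) :
  exists2 d, 0 <= d & forall I, tdist_in e w a b I <-> d \in I.
Proof.
have [p [path_p last_p uniq_p p_unique]] := tree_unique_path a b.
exists (walk_weight w a p) => [|I]; first exact: walk_weight_ge0.
split=> [[q [path_q last_q uniq_q]]|p_in]; last by exists p.
by rewrite (p_unique q).
Qed.

End TreeDistance.

Section Intervals.
Variable R : realType.

Definition itv_below (I : interval R) : interval R :=
  Order.meet (Interval -oo%O I.1) `[0, +oo[.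

Definition itv_above (I : interval R) : interval R :=
  Order.meet (Interval I.2 +oo%O) `[0, +oo[.

Lemma itv_below_ge0 I r : r \in itv_below I -> 0 <= r.
Proof. by rewrite in_itvI => /andP[_]; rewrite in_itv /= andbT. Qed.

Lemma itv_above_ge0 I r : r \in itv_above I -> 0 <= r.
Proof. by rewrite in_itvI => /andP[_]; rewrite in_itv /= andbT. Qed.

Lemma notin_itv_below_above I r :
  0 <= r -> (r \notin I) = (r \in itv_below I) || (r \in itv_above I).
Proof.
move=> r_ge0; have r_in : r \in `[0, +oo[ by rewrite in_itv /= r_ge0.
rewrite !in_itvI r_in !andbT.
by have := predC_itv I r; rewrite !inE.
Qed.

End Intervals.

Section PCG.
Variables (R : realType) (V : finType).

Definition tdist_graph (N : finType) (e : rel N) (w : N -> N -> R)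
    (f : V -> N) (I : interval R) : rel V :=
  fun u v => `[< tdist_in e w (f u) (f v) I >].

Lemma tdist_graph_PCG (N : finType) (e : rel N) (w : N -> N -> R)
    (f : V -> N) (I : interval R) :
  is_tree e -> (forall x y, e x y -> 0 <= w x y /\ w x y = w y x) ->
  injective f -> (forall x, is_leaf e x <-> exists v, f v = x) ->
  (forall r, r \in I -> 0 <= r) -> is_PCG R (tdist_graph e w f I).
Proof.
move=> tree_e w_ge0 inj_f leaves I_ge0.
exists N, e, w, f, I; split => //; split => // u v _.
by split=> /asboolP.
Qed.

Lemma OR_PCG2 (E H1 H2 : rel V) :
  is_PCG R H1 -> is_PCG R H2 ->
  (forall u v, u != v -> (E u v <-> H1 u v || H2 u v)) ->
  is_k_OR_PCG R 2 E.
Proof.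
move=> PCG_H1 PCG_H2 E_H12.
exists (fun i : 'I_2 => if i == ord0 then H1 else H2); split.
  by move=> i; case: ifP.
move=> u v uv; rewrite E_H12 //; split.
  by case/orP => [H1uv | H2uv]; [exists ord0 | exists ord_max].
by case=> i; case: ifP => _ ->; rewrite ?orbT.
Qed.

Lemma compl_PCG_OR_PCG (H : rel V) : is_PCG R H -> is_k_OR_PCG R 2 (compl_graph H).
Proof.
move=> [N [e [w [f [I [tree_e w_ge0 inj_f [leaves I_ge0 H_tdist]]]]]]].
apply: (@OR_PCG2 _ (tdist_graph e w f (itv_below I)) (tdist_graph e w f (itv_above I))).
- exact/tdist_graph_PCG/itv_below_ge0.
- exact/tdist_graph_PCG/itv_above_ge0.
move=> u v uv; have [d d_ge0 dP] := tdist_in_dist tree_e w_ge0 (f u) (f v).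
have H_d : H u v = (d \in I).
  by apply/idP/idP => [/(H_tdist _ _ uv)/(dP I) | /(dP I)/(H_tdist _ _ uv)].
have tdist_d J : `[< tdist_in e w (f u) (f v) J >] = (d \in J).
  by apply/asboolP/idP => /(dP J).
by rewrite /compl_graph /tdist_graph uv !tdist_d H_d notin_itv_below_above.
Qed.

Lemma OR_PCG_bigU (m k : nat) (E : rel V) (F : 'I_k -> rel V) :
  (forall i, is_k_OR_PCG R m (F i)) ->
  (forall u v, u != v -> (E u v <-> exists i, F i u v)) ->
  is_k_OR_PCG R (m * k) E.
Proof.
move=> F_OR E_F; have [G G_spec] := choice F_OR.
pose index_pair (j : 'I_(m * k)) := enum_val (cast_ord (esym (mxvec_cast m k)) j).
exists (fun j => G (index_pair j).2 (index_pair j).1); split.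
  by move=> j; case: (G_spec (index_pair j).2).
move=> u v uv; rewrite E_F //; split.
- case=> i /((G_spec i).2 u v uv) [a G_auv]; exists (mxvec_index a i).
  by rewrite /index_pair /mxvec_index cast_ordK enum_rankK.
- case=> j G_juv; exists (index_pair j).2.
  by apply/((G_spec _).2 u v uv); exists (index_pair j).1.
Qed.

End PCG.

Theorem theorem9 (R : realType) (k : nat) (V : finType) (E : rel V) :
  simple_graph E ->
  is_k_AND_PCG R k E ->
  is_k_OR_PCG R (2 * k) (compl_graph E).
Proof.
move=> _ [G [G_PCG E_G]].
apply: (OR_PCG_bigU (F := fun i => compl_graph (G i))).
  by move=> i; exact: compl_PCG_OR_PCG (G_PCG i).
move=> u v uv; rewrite /compl_graph uv /=.
split=> [nE | [i nG]]; last by apply: contra nG => /(E_G u v uv); apply.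
have /existsP [i nG] : [exists i, ~~ G i u v].
  by rewrite -negb_forall; apply: contra nE => /forallP/(E_G u v uv).
by exists i.
Qed.
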